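(* Under the standing setting below, let $C_0>0$. For an integer $K\ge1$ set $\alpha=K^{-1/6}$, $\gamma=\min\{K^{-2/3},1/L_f\}$, let $(x_0,y_0)$ satisfy $h(x_0,y_0)\le\alpha^2C_0$, take $\rho(x,y)=\|\nabla h(x,y)\|\,h(x_0,y_0)^{1/2}$, and run the Algorithm. Then there is a constant $c>0$ depending only on $L_f,L_h,C_f,C_0,\bar f$ and an upper bound on $f(x_0,y_0)$ (not on $K$) such that $$\frac1K\sum_{k=0}^{K-1}\big(\|\Delta_k^x\|^2+\|\Delta_k^y\|^2\big)\le cK^{-1/3},\qquad\frac1K\sum_{k=0}^{K-1}h_k\le cK^{-1/3}.$$ Consequently, for every $\epsilon>0$ there is $K=\mathcal{O}(\epsilon^{-3})$ such that some $t\in\{0,\dots,K-1\}$ satisfies $\max\{\|\nabla_y g(x_t,y_t)\|^2,\|\nabla f_t+\lambda_t\nabla h_t\|^2\}\le\epsilon$, i.e. $(x_t,y_t,\lambda_t)$ is an $\epsilon$-KKT point of $\min_{(x,y)}f(x,y)$ s.t. $h(x,y)=0$.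
   Context: Standing setting. $f,g:\mathbb{R}^n\times\mathbb{R}^m\to\mathbb{R}$. $f$ is continuously differentiable, $\bar f:=\inf f>-\infty$, $\nabla f$ is $L_f$-Lipschitz, and $\|\nabla f\|\le C_f$ everywhere. $g$ is twice continuously differentiable, and $h(x,y):=\|\nabla_y g(x,y)\|^2$ is continuously differentiable with $\nabla h$ being $L_h$-Lipschitz ($L_h>0$). Write $\nabla h=(\nabla_x h,\nabla_y h)$, $f_k=f(x_k,y_k)$, $h_k=h(x_k,y_k)$, $\nabla f_k=\nabla f(x_k,y_k)$, $\nabla h_k=\nabla h(x_k,y_k)$, etc. Given $\rho\ge0$, $\alpha,\gamma>0$, $(x_0,y_0)$, the Algorithm iterates for $k\ge0$: $\lambda_k=\big[-\nabla_x h_k^\top\nabla_x f_k-\nabla_y h_k^\top\nabla_y f_k+\alpha\rho(x_k,y_k)\big]_+/(\|\nabla_x h_k\|^2+\|\nabla_y h_k\|^2)$ if $\nabla h_k\ne0$, $\lambda_k=0$ otherwise; $\Delta_k^x=-\nabla_x f_k-\lambda_k\nabla_x h_k$, $\Delta_k^y=-\nabla_y f_k-\lambda_k\nabla_y h_k$; $x_{k+1}=x_k+\gamma\Delta_k^x$, $y_{k+1}=y_k+\gamma\Delta_k^y$. A triple $(x,y,\lambda)$ is an $\epsilon$-KKT point of $\min f$ s.t. $h=0$ if $h(x,y)\le\epsilon$ and $\|\nabla f(x,y)+\lambda\nabla h(x,y)\|^2\le\epsilon$. *)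

From HB Require Import structures.
From mathcomp Require Import all_boot all_order all_algebra.
From mathcomp Require Import all_classical all_reals all_analysis.
Set Implicit Arguments. Unset Strict Implicit. Unset Printing Implicit Defensive.
Import Order.TTheory GRing.Theory Num.Theory.
Import numFieldNormedType.Exports.
Local Open Scope ring_scope.
Local Open Scope classical_set_scope.

Definition dotv (R : realType) (n : nat) (u v : 'rV[R]_n) : R :=
  \sum_(i < n) u ord0 i * v ord0 i.
Definition sqn (R : realType) (n : nat) (u : 'rV[R]_n) : R := dotv u u.
Definition pnorm2 (R : realType) (n m : nat) (u : 'rV[R]_n) (v : 'rV[R]_m) : R :=
  sqn u + sqn v.
Definition pnorm (R : realType) (n m : nat) (u : 'rV[R]_n) (v : 'rV[R]_m) : R :=
  Num.sqrt (pnorm2 u v).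

Definition has_grad (R : realType) (n m : nat) (F : 'rV[R]_n -> 'rV[R]_m -> R)
  (Gx : 'rV[R]_n -> 'rV[R]_m -> 'rV[R]_n) (Gy : 'rV[R]_n -> 'rV[R]_m -> 'rV[R]_m) : Prop :=
  forall z : 'rV[R]_n * 'rV[R]_m,
    differentiable (fun w : 'rV[R]_n * 'rV[R]_m => F w.1 w.2) z /\
    ('d (fun w : 'rV[R]_n * 'rV[R]_m => F w.1 w.2) z
       = (fun dz : 'rV[R]_n * 'rV[R]_m => dotv (Gx z.1 z.2) dz.1 + dotv (Gy z.1 z.2) dz.2)
       :> ('rV[R]_n * 'rV[R]_m -> R)).

Definition grad_lipschitz (R : realType) (n m : nat) (L : R)
  (Gx : 'rV[R]_n -> 'rV[R]_m -> 'rV[R]_n) (Gy : 'rV[R]_n -> 'rV[R]_m -> 'rV[R]_m) : Prop :=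
  forall x y x' y', pnorm (Gx x y - Gx x' y') (Gy x y - Gy x' y') <= L * pnorm (x - x') (y - y').

Definition grad_bounded (R : realType) (n m : nat) (C : R)
  (Gx : 'rV[R]_n -> 'rV[R]_m -> 'rV[R]_n) (Gy : 'rV[R]_n -> 'rV[R]_m -> 'rV[R]_m) : Prop :=
  forall x y, pnorm (Gx x y) (Gy x y) <= C.

(* The gradient map z |-> (Gx z, Gy z) of a function is itself differentiable
   everywhere with continuous derivative (continuity of z |-> D(grad)(z) v for
   every direction v, which is continuity of the derivative in finite dimension).
   Together with has_grad this says: twice continuously differentiable. *)
Definition grad_C1 (R : realType) (n m : nat)
  (Gx : 'rV[R]_n -> 'rV[R]_m -> 'rV[R]_n) (Gy : 'rV[R]_n -> 'rV[R]_m -> 'rV[R]_m) : Prop :=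
  let G := fun w : 'rV[R]_n * 'rV[R]_m => (Gx w.1 w.2, Gy w.1 w.2) in
  (forall z, differentiable G z) /\
  (forall v : 'rV[R]_n * 'rV[R]_m, continuous (fun z => 'd G z v)).

Definition hfun (R : realType) (n m : nat) (Ggy : 'rV[R]_n -> 'rV[R]_m -> 'rV[R]_m)
  (x : 'rV[R]_n) (y : 'rV[R]_m) : R := sqn (Ggy x y).

Definition rho_of (R : realType) (n m : nat)
  (ghx : 'rV[R]_n -> 'rV[R]_m -> 'rV[R]_n) (ghy : 'rV[R]_n -> 'rV[R]_m -> 'rV[R]_m)
  (h : 'rV[R]_n -> 'rV[R]_m -> R) (x0 : 'rV[R]_n) (y0 : 'rV[R]_m)
  (x : 'rV[R]_n) (y : 'rV[R]_m) : R :=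
  pnorm (ghx x y) (ghy x y) * Num.sqrt (h x0 y0).

Section Algorithm.
Variables (R : realType) (n m : nat).
Variables (gfx : 'rV[R]_n -> 'rV[R]_m -> 'rV[R]_n) (gfy : 'rV[R]_n -> 'rV[R]_m -> 'rV[R]_m).
Variables (ghx : 'rV[R]_n -> 'rV[R]_m -> 'rV[R]_n) (ghy : 'rV[R]_n -> 'rV[R]_m -> 'rV[R]_m).
Variables (rho : 'rV[R]_n -> 'rV[R]_m -> R) (alpha gamma : R).
Variables (x0 : 'rV[R]_n) (y0 : 'rV[R]_m).

Definition alg_lambda (z : 'rV[R]_n * 'rV[R]_m) : R :=
  let x := z.1 in let y := z.2 in
  if (ghx x y == 0) && (ghy x y == 0) then 0
  else Num.max (- dotv (ghx x y) (gfx x y) - dotv (ghy x y) (gfy x y) + alpha * rho x y) 0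
       / (sqn (ghx x y) + sqn (ghy x y)).

Definition alg_dx (z : 'rV[R]_n * 'rV[R]_m) : 'rV[R]_n :=
  - gfx z.1 z.2 - alg_lambda z *: ghx z.1 z.2.
Definition alg_dy (z : 'rV[R]_n * 'rV[R]_m) : 'rV[R]_m :=
  - gfy z.1 z.2 - alg_lambda z *: ghy z.1 z.2.

Fixpoint alg_iter (k : nat) : 'rV[R]_n * 'rV[R]_m :=
  match k with
  | 0 => (x0, y0)
  | k'.+1 => let z := alg_iter k' in (z.1 + gamma *: alg_dx z, z.2 + gamma *: alg_dy z)
  end.
End Algorithm.

Definition eps_KKT (R : realType) (n m : nat) (eps : R)
  (gfx : 'rV[R]_n -> 'rV[R]_m -> 'rV[R]_n) (gfy : 'rV[R]_n -> 'rV[R]_m -> 'rV[R]_m)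
  (h : 'rV[R]_n -> 'rV[R]_m -> R)
  (ghx : 'rV[R]_n -> 'rV[R]_m -> 'rV[R]_n) (ghy : 'rV[R]_n -> 'rV[R]_m -> 'rV[R]_m)
  (x : 'rV[R]_n) (y : 'rV[R]_m) (lam : R) : Prop :=
  h x y <= eps /\ pnorm2 (gfx x y + lam *: ghx x y) (gfy x y + lam *: ghy x y) <= eps.

From HB Require Import structures.
From mathcomp Require Import all_boot all_order all_algebra.
From mathcomp Require Import all_classical all_reals all_analysis.
From mathcomp Require Import ring lra.
Import Order.TTheory GRing.Theory Num.Theory.
Import numFieldNormedType.Exports.
Set Implicit Arguments. Unset Strict Implicit. Unset Printing Implicit Defensive.
Local Open Scope ring_scope.
Local Open Scope classical_set_scope.

(* Write t = K^(-1/3), so alpha^2 = t, gamma <= t^2 and 1/K = t^3.  The multiplier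
   lambda_k makes Delta_k a first-order descent direction for h, <grad h, Delta_k> <= 0,
   while <grad f, Delta_k> = -|Delta_k|^2 + lambda_k alpha rho_k by complementary
   slackness.  Since rho carries the factor h(x0,y0)^(1/2) <= alpha C0^(1/2), Cauchy-Schwarz
   gives lambda_k alpha rho_k = O(t).  The descent lemma for f then yields
   f_(k+1) <= f_k - gamma/2 |Delta_k|^2 + gamma O(t); summed over K steps,
   gamma/2 sum_k |Delta_k|^2 <= f(x0,y0) - inf f + O(1), i.e. the average of |Delta_k|^2
   is O(t).  The descent lemma for h shows that h grows only by its curvature term, so
   h_k <= h(x0,y0) + L_h gamma O(1) = O(t).  An iterate whose |Delta|^2 + h is at most
   the average is the eps-KKT point, because grad f + lambda grad h = - Delta. *)

Section Dot.
Variables (R : realType) (n : nat).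
Implicit Types u v w : 'rV[R]_n.

Lemma dotvC u v : dotv u v = dotv v u.
Proof. by apply: eq_bigr => i _; rewrite mulrC. Qed.

Lemma dotvDl u v w : dotv (u + v) w = dotv u w + dotv v w.
Proof. by rewrite /dotv -big_split; apply: eq_bigr => i _; rewrite mxE mulrDl. Qed.

Lemma dotvZl (k : R) u w : dotv (k *: u) w = k * dotv u w.
Proof. by rewrite /dotv mulr_sumr; apply: eq_bigr => i _; rewrite mxE mulrA. Qed.

Lemma dotvNl u w : dotv (- u) w = - dotv u w.
Proof. by rewrite -scaleN1r dotvZl mulN1r. Qed.

Lemma dotvBl u v w : dotv (u - v) w = dotv u w - dotv v w.
Proof. by rewrite dotvDl dotvNl. Qed.

Lemma dotvZr (k : R) u w : dotv w (k *: u) = k * dotv w u.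
Proof. by rewrite !(dotvC w) dotvZl. Qed.

Lemma dotvNr u w : dotv w (- u) = - dotv w u.
Proof. by rewrite !(dotvC w) dotvNl. Qed.

Lemma dotvBr u v w : dotv w (u - v) = dotv w u - dotv w v.
Proof. by rewrite !(dotvC w) dotvBl. Qed.

Lemma dotv0r w : dotv w 0 = 0.
Proof. by rewrite -(scale0r 0) dotvZr mul0r. Qed.

Lemma sqn_ge0 u : 0 <= sqn u.
Proof. by apply: sumr_ge0 => i _; rewrite -expr2 sqr_ge0. Qed.

Lemma sqn_eq0 u : (sqn u == 0) = (u == 0).
Proof.
apply/idP/eqP => [|->]; last by rewrite /sqn dotv0r.
rewrite psumr_eq0 => [/allP u0|i _]; last by rewrite -expr2 sqr_ge0.
apply/matrixP => i j; rewrite ord1 mxE.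
by have := u0 j (mem_index_enum _); rewrite mulf_eq0 orbb => /eqP.
Qed.

Lemma sqnN u : sqn (- u) = sqn u.
Proof. by rewrite /sqn dotvNl dotvNr opprK. Qed.

Lemma sqnZ (k : R) u : sqn (k *: u) = k ^+ 2 * sqn u.
Proof. by rewrite /sqn dotvZl dotvZr mulrA -expr2. Qed.

Lemma sqnB u v : sqn (u - v) = sqn u - 2 * dotv u v + sqn v.
Proof. by rewrite /sqn !(dotvBl, dotvBr) (dotvC v u); ring. Qed.

Lemma sqn_NBZ u v (l : R) : sqn (- u - l *: v) = sqn u + 2 * l * dotv u v + l ^+ 2 * sqn v.
Proof.
rewrite /sqn !(dotvBl, dotvBr, dotvNl, dotvNr, dotvZl, dotvZr) (dotvC v u).
by rewrite expr2; ring.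
Qed.
End Dot.

Section PairNorm.
Variables (R : realType) (n m : nat).
Implicit Types (a u : 'rV[R]_n) (b v : 'rV[R]_m).

Lemma pnorm2_ge0 a b : 0 <= pnorm2 a b.
Proof. by rewrite addr_ge0 // sqn_ge0. Qed.

Lemma pnorm_ge0 a b : 0 <= pnorm a b.
Proof. exact: sqrtr_ge0. Qed.

Lemma pnorm_sqr a b : pnorm a b ^+ 2 = pnorm2 a b.
Proof. by rewrite sqr_sqrtr // pnorm2_ge0. Qed.

Lemma pnorm2_eq0 a b : pnorm2 a b = 0 -> a = 0 /\ b = 0.
Proof.
move=> /eqP; rewrite paddr_eq0 ?sqn_ge0 // !sqn_eq0.
by case/andP => /eqP -> /eqP ->.
Qed.

Lemma pnorm2Z (k : R) a b : pnorm2 (k *: a) (k *: b) = k ^+ 2 * pnorm2 a b.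
Proof. by rewrite /pnorm2 !sqnZ mulrDr. Qed.

Lemma pnorm2N a b : pnorm2 (- a) (- b) = pnorm2 a b.
Proof. by rewrite /pnorm2 !sqnN. Qed.

Lemma pnormZ (k : R) a b : 0 <= k -> pnorm (k *: a) (k *: b) = k * pnorm a b.
Proof. by move=> k0; rewrite /pnorm pnorm2Z sqrtrM ?sqr_ge0 // sqrtr_sqr ger0_norm. Qed.

Lemma pnormN a b : pnorm (- a) (- b) = pnorm a b.
Proof. by rewrite /pnorm pnorm2N. Qed.

Lemma dotv2_le_pnorm2 a b u v :
  2 * (dotv a u + dotv b v) <= pnorm2 a b + pnorm2 u v.
Proof.
have := pnorm2_ge0 (a - u) (b - v); rewrite /pnorm2 !sqnB; lra.
Qed.

(* Apply the previous inequality to (|u,v| a, |u,v| b) and (|a,b| u, |a,b| v). *)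
Lemma dotv2_le_pnorm a b u v : dotv a u + dotv b v <= pnorm a b * pnorm u v.
Proof.
set p := pnorm a b; set q := pnorm u v.
have [p0 q0] : 0 <= p /\ 0 <= q by split; apply: pnorm_ge0.
have [pq0|pq_gt0] := eqVneq (p * q) 0.
  rewrite pq0; move/eqP: pq0; rewrite mulf_eq0 => /orP[] /eqP /(congr1 (fun x => x ^+ 2)).
    by rewrite pnorm_sqr expr0n => /pnorm2_eq0 [-> ->]; rewrite !(dotvC 0) !dotv0r addr0.
  by rewrite pnorm_sqr expr0n => /pnorm2_eq0 [-> ->]; rewrite !dotv0r addr0.
have := dotv2_le_pnorm2 (q *: a) (q *: b) (p *: u) (p *: v).
rewrite !pnorm2Z -!pnorm_sqr -/p -/q !(dotvZl, dotvZr) => H.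
have pq : 0 < p * q by rewrite lt_def pq_gt0 mulr_ge0.
rewrite -(ler_pM2l pq) -(ler_pM2l (ltr0n R 2)).
by move: H; rewrite !mulrA; lra.
Qed.
End PairNorm.

Section Descent.
Variables (R : realType) (n m : nat).
Variables (F : 'rV[R]_n -> 'rV[R]_m -> R) (Gx : 'rV[R]_n -> 'rV[R]_m -> 'rV[R]_n)
  (Gy : 'rV[R]_n -> 'rV[R]_m -> 'rV[R]_m).
Hypothesis HG : has_grad F Gx Gy.

Let F' (p : 'rV[R]_n * 'rV[R]_m) := F p.1 p.2.
Let dF (p w : 'rV[R]_n * 'rV[R]_m) := dotv (Gx p.1 p.2) w.1 + dotv (Gy p.1 p.2) w.2.

Lemma is_derive_along (p w : 'rV[R]_n * 'rV[R]_m) (s : R) :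
  is_derive s 1 (fun t : R => F' (t *: w + p)) (dF (s *: w + p) w).
Proof.
have [Fdiff dFE] := HG (s *: w + p).
have path_diff : is_diff s (fun t : R => t *: w + p) (( *:%R^~ w) + 0).
  by have -> : (fun t : R => t *: w + p) = ( *:%R^~ w) + cst p by []; apply: is_diffD.
have comp_diff : differentiable (F' \o (fun t : R => t *: w + p)) s.
  exact: differentiable_comp.
have -> : dF (s *: w + p) w = 'D_1 (F' \o (fun t : R => t *: w + p)) s.
  by rewrite deriveE // diff_comp // diff_val /= addr0 scale1r /F' dFE.
apply: DeriveDef => //; exact: diff_derivable.
Qed.

Hypotheses (L : R) (HL : grad_lipschitz L Gx Gy).

Lemma dF_increment_le (p w : 'rV[R]_n * 'rV[R]_m) (c : R) : 0 <= c ->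
  dF (c *: w + p) w - dF p w <= L * c * pnorm2 w.1 w.2.
Proof.
move=> c0.
have -> : dF (c *: w + p) w - dF p w
    = dotv (Gx (c *: w + p).1 (c *: w + p).2 - Gx p.1 p.2) w.1
      + dotv (Gy (c *: w + p).1 (c *: w + p).2 - Gy p.1 p.2) w.2.
  by rewrite /dF !dotvBl; lra.
apply: le_trans (dotv2_le_pnorm _ _ _ _) _.
apply: le_trans (ler_wpM2r (pnorm_ge0 _ _) (HL _ _ _ _)) _.
by rewrite /= !addrK pnormZ // -!mulrA -expr2 pnorm_sqr.
Qed.

(* Along the segment, t |-> F (p + t w) - t dF p w - L/2 t^2 |w|^2 has a nonpositive
   derivative by the previous lemma, hence does not increase. *)
Lemma descent_lemma x y u v (g : R) : 0 <= g ->
  F (x + g *: u) (y + g *: v)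
    <= F x y + g * (dotv (Gx x y) u + dotv (Gy x y) v) + L / 2 * g ^+ 2 * pnorm2 u v.
Proof.
move=> g0; pose p := (x, y); pose w := (u, v).
set a := dF p w; set b := L / 2 * pnorm2 u v.
pose psi : R -> R^o := ((fun t : R => F' (t *: w + p) : R^o)
  - (a \*: (id : R -> R^o)) - (b \*: ((id : R -> R^o) * id)))%R.
have psi_der (t : R) :
    is_derive t 1 psi (dF (t *: w + p) w - a *: 1 - b *: (t *: 1 + t *: 1)).
  apply: is_deriveB; last first.
  apply: is_deriveB; last first.
  exact: is_derive_along.
have psi_nincr : psi g <= psi 0.
  apply: (@ler0_derive1_nincry _ psi 0) => //.
  - move=> t; rewrite in_itv /= andbT => /ltW t0.
    rewrite derive1E derive_val /GRing.scale /= !mulr1.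
    have -> : b * (t + t) = L * t * pnorm2 u v by rewrite /b; field.
    by rewrite subr_le0; exact: dF_increment_le.
  - by apply: derivable_within_continuous => t _; case: (psi_der t).
have psi_g : psi g = F (g *: u + x) (g *: v + y) - a * g - b * (g * g) by [].
have psi_0 : psi 0 = F x y.
  have -> : psi 0 = F' (0 *: w + p) - a * 0 - b * (0 * 0) by [].
  by rewrite scale0r add0r !mulr0 !subr0.
move: psi_nincr; rewrite psi_g psi_0 (addrC x) (addrC y) /a /b /dF /= expr2.
by rewrite [_ * (g * g) * _]mulrAC [g * _]mulrC; lra.
Qed.
End Descent.

Section Direction.
Variables (R : realType) (n m : nat).
Variables (gfx : 'rV[R]_n -> 'rV[R]_m -> 'rV[R]_n) (gfy : 'rV[R]_n -> 'rV[R]_m -> 'rV[R]_m).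
Variables (ghx : 'rV[R]_n -> 'rV[R]_m -> 'rV[R]_n) (ghy : 'rV[R]_n -> 'rV[R]_m -> 'rV[R]_m).
Variables (rho : 'rV[R]_n -> 'rV[R]_m -> R) (alpha : R) (z : 'rV[R]_n * 'rV[R]_m).

Let lam := alg_lambda gfx gfy ghx ghy rho alpha z.
Let dx := alg_dx gfx gfy ghx ghy rho alpha z.
Let dy := alg_dy gfx gfy ghx ghy rho alpha z.
Let G := dotv (gfx z.1 z.2) (ghx z.1 z.2) + dotv (gfy z.1 z.2) (ghy z.1 z.2).
Let N := pnorm2 (ghx z.1 z.2) (ghy z.1 z.2).
Let ar := alpha * rho z.1 z.2.

Lemma alg_lambda_cases :
  (ghx z.1 z.2 = 0 /\ ghy z.1 z.2 = 0 /\ lam = 0) \/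
  (0 < N /\ lam * N = Num.max (- G + ar) 0).
Proof.
rewrite /lam /alg_lambda /=; case: ifP => [/andP[/eqP gx0 /eqP gy0]|gh_nz]; [by left|right].
have N_gt0 : 0 < N.
  rewrite lt_def pnorm2_ge0 andbT; apply: contraFN gh_nz => /eqP /pnorm2_eq0[-> ->].
  by rewrite !eqxx.
by split=> //; rewrite -/N divfK ?gt_eqF // /G /ar opprD !(dotvC (gfx _ _)) (dotvC (gfy _ _)).
Qed.

Lemma alg_lambda_kkt : 0 <= ar ->
  [/\ 0 <= lam, lam * (G + lam * N - ar) = 0 & 0 <= G + lam * N].
Proof.
move=> ar0; case: alg_lambda_cases => [[gx0 [gy0 ->]]|[N_gt0 lamN]].
  by rewrite /G gx0 gy0 !dotv0r !mul0r addr0.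
have lam0 : 0 <= lam.
  by rewrite -(pmulr_lge0 _ N_gt0) lamN le_max lexx orbT.
rewrite lamN; split=> //.
- have [A0|A0] := leP 0 (- G + ar).
    by rewrite addrA subrr add0r subrr mulr0.
  move: lamN; rewrite (max_idPr (ltW A0)) => /eqP.
  by rewrite mulf_eq0 (gt_eqF N_gt0) orbF => /eqP ->; rewrite mul0r.
- have : - G + ar <= Num.max (- G + ar) 0 by rewrite le_max lexx.
  lra.
Qed.

Lemma alg_dir_dot_gradf : 0 <= ar ->
  dotv (gfx z.1 z.2) dx + dotv (gfy z.1 z.2) dy = - pnorm2 dx dy + lam * ar.
Proof.
case/alg_lambda_kkt => _ slack _.
have -> : pnorm2 dx dy = pnorm2 (gfx z.1 z.2) (gfy z.1 z.2) + 2 * lam * G + lam ^+ 2 * N.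
  by rewrite /pnorm2 /dx /dy /alg_dx /alg_dy !sqn_NBZ -/lam /G /N /pnorm2; ring.
rewrite /dx /dy /alg_dx /alg_dy -/lam !(dotvBr, dotvNr, dotvZr).
by apply/eqP; rewrite -subr_eq0 -slack /G /pnorm2 /sqn; apply/eqP; ring.
Qed.

Lemma alg_dir_dot_gradh_le0 : 0 <= ar ->
  dotv (ghx z.1 z.2) dx + dotv (ghy z.1 z.2) dy <= 0.
Proof.
case/alg_lambda_kkt => _ _ descent.
rewrite /dx /dy /alg_dx /alg_dy -/lam !(dotvBr, dotvNr, dotvZr).
by rewrite !(dotvC (ghx _ _)) !(dotvC (ghy _ _)); move: descent; rewrite /G /N /pnorm2 /sqn; lra.
Qed.

Lemma alg_lambda_mul_le (s : R) : 0 <= alpha -> 0 <= s ->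
  rho z.1 z.2 = pnorm (ghx z.1 z.2) (ghy z.1 z.2) * s ->
  lam * ar <= (pnorm (gfx z.1 z.2) (gfy z.1 z.2) + alpha * s) * alpha * s.
Proof.
move=> alpha0 s0 rhoE; set r := pnorm (ghx z.1 z.2) (ghy z.1 z.2).
have bound_ge0 : 0 <= (pnorm (gfx z.1 z.2) (gfy z.1 z.2) + alpha * s) * alpha * s.
  by rewrite !mulr_ge0 // addr_ge0 ?pnorm_ge0 ?mulr_ge0.
case: alg_lambda_cases => [[_ [_ ->]]|[N_gt0 lamN]]; first by rewrite mul0r.
have r_gt0 : 0 < r.
  rewrite lt_def pnorm_ge0 andbT; apply: contraTneq N_gt0 => r0.
  by rewrite /N -pnorm_sqr -/r r0 expr0n ltxx.
have minus_G_le : - G <= pnorm (gfx z.1 z.2) (gfy z.1 z.2) * r.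
  by have := dotv2_le_pnorm (- gfx z.1 z.2) (- gfy z.1 z.2) (ghx z.1 z.2) (ghy z.1 z.2);
     rewrite pnormN !dotvNl -/r /G; lra.
have lam_r_le : lam * r <= pnorm (gfx z.1 z.2) (gfy z.1 z.2) + alpha * s.
  rewrite -(ler_pM2r r_gt0) -mulrA -expr2 /r pnorm_sqr -/N -/r lamN ge_max.
  apply/andP; split; last by apply: mulr_ge0 (ltW r_gt0); rewrite addr_ge0 ?pnorm_ge0 ?mulr_ge0.
  by rewrite mulrDl lerD // /ar rhoE -/r mulrA [alpha * s * r]mulrAC.
rewrite /ar rhoE -/r (_ : lam * (alpha * (r * s)) = lam * r * alpha * s); last by ring.
by rewrite ler_wpM2r // ler_wpM2r.
Qed.

Lemma pnorm2_kkt_residual :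
  pnorm2 (gfx z.1 z.2 + lam *: ghx z.1 z.2) (gfy z.1 z.2 + lam *: ghy z.1 z.2) = pnorm2 dx dy.
Proof. by rewrite /dx /dy /alg_dx /alg_dy -!opprD pnorm2N. Qed.
End Direction.

Lemma telescope_le (R : realDomainType) (u d : nat -> R) :
  (forall k, u k.+1 <= u k + d k) -> forall N, u N <= u 0 + \sum_(k < N) d k.
Proof.
move=> step; elim=> [|N IH]; first by rewrite big_ord0 addr0.
by rewrite big_ord_recr /= addrA; apply: le_trans (step N) _; rewrite lerD2r.
Qed.

Section Run.
Variables (R : realType) (n m : nat) (Lf Lh : R).
Variables (f : 'rV[R]_n -> 'rV[R]_m -> R)
  (gfx : 'rV[R]_n -> 'rV[R]_m -> 'rV[R]_n) (gfy : 'rV[R]_n -> 'rV[R]_m -> 'rV[R]_m).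
Variables (h : 'rV[R]_n -> 'rV[R]_m -> R)
  (ghx : 'rV[R]_n -> 'rV[R]_m -> 'rV[R]_n) (ghy : 'rV[R]_n -> 'rV[R]_m -> 'rV[R]_m).
Hypotheses (Hf : has_grad f gfx gfy) (HfL : grad_lipschitz Lf gfx gfy).
Hypotheses (Hh : has_grad h ghx ghy) (HhL : grad_lipschitz Lh ghx ghy).
Variables (rho : 'rV[R]_n -> 'rV[R]_m -> R) (alpha gamma : R).
Variables (x0 : 'rV[R]_n) (y0 : 'rV[R]_m).
Hypotheses (rho_ge0 : forall x y, 0 <= rho x y) (alpha_ge0 : 0 <= alpha).
Hypotheses (gamma_gt0 : 0 < gamma) (gamma_Lf : gamma * Lf <= 1).

Let z := alg_iter gfx gfy ghx ghy rho alpha gamma x0 y0.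
Let lam k := alg_lambda gfx gfy ghx ghy rho alpha (z k).
Let D k := pnorm2 (alg_dx gfx gfy ghx ghy rho alpha (z k)) (alg_dy gfx gfy ghx ghy rho alpha (z k)).

Let ar_ge0 k : 0 <= alpha * rho (z k).1 (z k).2.
Proof. exact: mulr_ge0. Qed.

Lemma alg_f_step k :
  f (z k.+1).1 (z k.+1).2
    <= f (z k).1 (z k).2 - gamma / 2 * D k + gamma * (lam k * (alpha * rho (z k).1 (z k).2)).
Proof.
apply: le_trans (descent_lemma Hf HfL _ _ _ _ (ltW gamma_gt0)) _.
rewrite alg_dir_dot_gradf // -/(D k) -/(lam k).
have curv : Lf / 2 * gamma ^+ 2 * D k <= gamma / 2 * D k.
  rewrite expr2 (_ : _ * _ = (gamma * Lf) * (gamma / 2 * D k)); last by ring.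
  by rewrite ler_piMl // mulr_ge0 ?divr_ge0 ?pnorm2_ge0 // ltW.
by move: curv; set X := lam k * _; rewrite mulrDr; lra.
Qed.

Lemma alg_h_step k :
  h (z k.+1).1 (z k.+1).2 <= h (z k).1 (z k).2 + Lh / 2 * gamma ^+ 2 * D k.
Proof.
apply: le_trans (descent_lemma Hh HhL _ _ _ _ (ltW gamma_gt0)) _.
rewrite lerD2r gerDl; apply: mulr_ge0_le0; [exact: ltW | exact: alg_dir_dot_gradh_le0].
Qed.

Lemma alg_sum_sqdir_le (fbar e : R) : (forall x y, fbar <= f x y) ->
  (forall k, lam k * (alpha * rho (z k).1 (z k).2) <= e) ->
  forall N, gamma / 2 * \sum_(k < N) D k <= f x0 y0 - fbar + N%:R * (gamma * e).
Proof.
move=> f_ge step_le N.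
have tele : f (z N).1 (z N).2 <= f x0 y0 + \sum_(k < N) (- (gamma / 2 * D k) + gamma * e).
  apply: (telescope_le (u := fun k => f (z k).1 (z k).2)
    (d := fun k => - (gamma / 2 * D k) + gamma * e)) => k.
  apply: le_trans (alg_f_step k) _; rewrite addrA lerD2l.
  by apply: ler_wpM2l; [exact: ltW | exact: step_le].
rewrite mulr_natl; move: tele; rewrite big_split /= sumrN -mulr_sumr sumr_const card_ord.
by have := f_ge (z N).1 (z N).2; lra.
Qed.

Lemma alg_h_le N :
  h (z N).1 (z N).2 <= h x0 y0 + Lh / 2 * gamma ^+ 2 * \sum_(k < N) D k.
Proof.
rewrite mulr_sumr; apply: (telescope_le (u := fun k => h (z k).1 (z k).2)
  (d := fun k => Lh / 2 * gamma ^+ 2 * D k)) => k.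
exact: alg_h_step.
Qed.
End Run.

Section Mean.
Variables (R : realFieldType) (K : nat) (a : nat -> R).

Lemma mean_le (M : R) : (0 < K)%N -> (forall k, (k < K)%N -> a k <= M) ->
  K%:R^-1 * \sum_(k < K) a k <= M.
Proof.
move=> K_gt0 aM.
have K0 : K%:R != 0 :> R by rewrite pnatr_eq0 -lt0n.
have sum_le : \sum_(k < K) a k <= \sum_(k < K) M by apply: ler_sum => k _; exact: aM.
apply: le_trans (ler_wpM2l _ sum_le) _; first by rewrite invr_ge0 ler0n.
by rewrite sumr_const card_ord -[M *+ K]mulr_natl mulKf.
Qed.

Lemma exists_le_mean : (0 < K)%N ->
  exists2 k, (k < K)%N & a k <= K%:R^-1 * \sum_(k < K) a k.
Proof.
move=> K_gt0; have K0 : K%:R != 0 :> R by rewrite pnatr_eq0 -lt0n.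
have [k _ kmin] := arg_minP (fun i : 'I_K => a i) (isT : xpredT (Ordinal K_gt0)).
exists k => //; rewrite -[a k](mulKf K0); apply: ler_wpM2l; first by rewrite invr_ge0 ler0n.
by rewrite mulr_natl -[K in _ *+ K]card_ord -sumr_const; apply: ler_sum => j _; exact: kmin.
Qed.
End Mean.

Lemma Kpow_third_facts (R : realType) (K : nat) : (1 <= K)%N ->
  let t : R := K%:R `^ (- (1 / 3)) in
  [/\ 0 < t, t <= 1, (K%:R `^ (- (1 / 6))) ^+ 2 = t,
      K%:R `^ (- (2 / 3)) = t ^+ 2 & K%:R^-1 = t ^+ 3].
Proof.
move=> K1 t.
have K0 : (0 : R) < K%:R by rewrite ltr0n.
have powE (a : R) (k : nat) : a = - (1 / 3) * k%:R -> (K%:R `^ a) = t ^+ k.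
  by move=> ak; rewrite -powR_mulrn ?powR_ge0 // -powRrM /t -ak.
have invK : (K%:R : R)^-1 = t ^+ 3 by rewrite -powR_inv1 ?ltW // (powE (-1) 3) //; lra.
split=> //; first exact: powR_gt0.
- have : t ^+ 3 <= 1 by rewrite -invK invf_le1 // ler1n.
  by apply: contraTT; rewrite -!ltNge => t1; rewrite exprn_egt1.
- by rewrite -powR_mulrn ?powR_ge0 // -powRrM /t; congr (_ `^ _); lra.
- by rewrite (powE _ 2) //; lra.
Qed.

Lemma Kpow_third_lt (R : realType) (c eps : R) (K : nat) : 0 < c -> 0 < eps ->
  c ^+ 3 * eps ^- 3 < K%:R -> c * K%:R `^ (- (1 / 3)) < eps.
Proof.
move=> c_gt0 eps_gt0 cK.
have eps3_gt0 : 0 < eps ^+ 3 by rewrite exprn_gt0.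
have K1 : (1 <= K)%N by rewrite -(ltr0n R); apply: lt_trans cK; rewrite divr_gt0 ?exprn_gt0.
have [t_gt0 _ _ _ invKE] := Kpow_third_facts R K1.
rewrite -(@ltr_pXn2r _ 3) ?nnegrE ?mulr_ge0 ?ltW // exprMn -invKE ltr_pdivrMr ?ltr0n //.
by rewrite mulrC -ltr_pdivrMr.
Qed.

Lemma step_size_facts (R : realFieldType) (L t : R) : 0 < L -> 0 < t -> t <= 1 ->
  let gamma := Num.min (t ^+ 2) L^-1 in
  [/\ 0 < gamma, gamma <= t ^+ 2, gamma * L <= 1 & t ^+ 2 <= gamma * (1 + L)].
Proof.
move=> L0 t0 t1 gamma.
have t2_le1 : t ^+ 2 <= 1 by rewrite expr_le1 // ltW.
split; first by rewrite lt_min exprn_gt0 // invr_gt0.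
- by rewrite ge_min lexx.
- by rewrite -ler_pdivlMr // mul1r ge_min lexx orbT.
rewrite /gamma mulrDr mulr1; have [tL|Lt] := leP (t ^+ 2) L^-1.
  by rewrite lerDl mulr_ge0 ?exprn_ge0 ?ltW.
by rewrite mulVf ?gt_eqF //; have := invr_gt0 L; rewrite L0; move/ltW; lra.
Qed.

Lemma rate_constant_facts (R : realFieldType) (b Lf Lh C0 : R) : 0 < Lf -> 0 < Lh -> 0 < C0 ->
  let c := 2 * `|b| * (1 + Lf) + (C0 + Lh * `|b|) in
  [/\ 0 < c, 2 * b * (1 + Lf) <= c, C0 + Lh * b <= c & 2 * b * (1 + Lf) + (C0 + Lh * b) <= c].
Proof.
move=> /ltW Lf_ge0 /ltW Lh_ge0 C0_gt0 c.
have [b_le B_ge0] : b <= `|b| /\ 0 <= `|b| by split; [exact: ler_norm | exact: normr_ge0].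
have c1_ge0 : 0 <= 2 * `|b| * (1 + Lf) by rewrite !mulr_ge0 ?addr_ge0.
have c2_gt0 : 0 < C0 + Lh * `|b| by rewrite ltr_wpDr ?mulr_ge0.
have b1_le : 2 * b * (1 + Lf) <= 2 * `|b| * (1 + Lf) by rewrite ler_wpM2r ?ler_wpM2l ?addr_ge0.
have b2_le : C0 + Lh * b <= C0 + Lh * `|b| by rewrite lerD2l ler_wpM2l.
split; first by rewrite ltr_wpDl.
- by apply: le_trans b1_le _; rewrite lerDl ltW.
- by apply: le_trans b2_le _; rewrite lerDr.
- exact: lerD.
Qed.

Section Rates.
Variables (R : realType) (Lf Lh Cf C0 fbar Fup : R) (n m : nat).
Variables (f : 'rV[R]_n -> 'rV[R]_m -> R)
  (gfx : 'rV[R]_n -> 'rV[R]_m -> 'rV[R]_n) (gfy : 'rV[R]_n -> 'rV[R]_m -> 'rV[R]_m)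
  (ggy : 'rV[R]_n -> 'rV[R]_m -> 'rV[R]_m)
  (ghx : 'rV[R]_n -> 'rV[R]_m -> 'rV[R]_n) (ghy : 'rV[R]_n -> 'rV[R]_m -> 'rV[R]_m).
Hypotheses (Lf_gt0 : 0 < Lf) (Lh_gt0 : 0 < Lh).
Hypotheses (Hf : has_grad f gfx gfy) (HfL : grad_lipschitz Lf gfx gfy)
  (HfB : grad_bounded Cf gfx gfy) (f_ge : forall x y, fbar <= f x y).
Hypotheses (Hh : has_grad (hfun ggy) ghx ghy) (HhL : grad_lipschitz Lh ghx ghy).

(* Bounds gamma/2 times the sum of |Delta_k|^2 over K steps: the initial gap
   Fup - inf f, plus the total ascent K gamma (Cf + sqrt C0) sqrt C0 t <= (Cf + sqrt C0) sqrt C0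
   caused by the lambda alpha rho term. *)
Definition descent_budget := Fup - fbar + (Cf + Num.sqrt C0) * Num.sqrt C0.

Section Schedule.
Variables (K : nat) (x0 : 'rV[R]_n) (y0 : 'rV[R]_m).
Hypothesis K_gt0 : (0 < K)%N.

Let t : R := K%:R `^ (- (1 / 3)).
Let alpha : R := K%:R `^ (- (1 / 6)).
Let gamma : R := Num.min (K%:R `^ (- (2 / 3))) Lf^-1.
Hypotheses (h0 : hfun ggy x0 y0 <= alpha ^+ 2 * C0) (f0 : f x0 y0 <= Fup).
Let rho := rho_of ghx ghy (hfun ggy) x0 y0.
Let z := alg_iter gfx gfy ghx ghy rho alpha gamma x0 y0.
Let D k := pnorm2 (alg_dx gfx gfy ghx ghy rho alpha (z k)) (alg_dy gfx gfy ghx ghy rho alpha (z k)).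

Let t_facts : [/\ 0 < t, t <= 1, alpha ^+ 2 = t, K%:R^-1 = t ^+ 3 & K%:R * t ^+ 3 = 1].
Proof.
have [t_gt0 t_le1 alphaE _ invKE] := Kpow_third_facts R K_gt0.
by split=> //; rewrite -invKE mulfV // pnatr_eq0 -lt0n.
Qed.

Let gamma_facts :
  [/\ 0 < gamma, gamma <= t ^+ 2, gamma * Lf <= 1 & t ^+ 2 <= gamma * (1 + Lf)].
Proof.
have [t_gt0 t_le1 _ gammaE _] := Kpow_third_facts R K_gt0.
by rewrite /gamma gammaE; exact: step_size_facts.
Qed.

Let alpha_ge0 : 0 <= alpha. Proof. exact: powR_ge0. Qed.

Let rho_ge0 x y : 0 <= rho x y. Proof. by rewrite mulr_ge0 ?pnorm_ge0 ?sqrtr_ge0. Qed.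

Lemma alg_ascent_le k :
  alg_lambda gfx gfy ghx ghy rho alpha (z k) * (alpha * rho (z k).1 (z k).2)
    <= (Cf + Num.sqrt C0) * Num.sqrt C0 * t.
Proof.
have [_ t_le1 alphaE _ _] := t_facts.
set sC := Num.sqrt C0; set s := Num.sqrt (hfun ggy x0 y0).
have [sC_ge0 s_ge0] : 0 <= sC /\ 0 <= s by split; exact: sqrtr_ge0.
have alpha_s_le : alpha * s <= t * sC.
  rewrite -alphaE expr2 -mulrA ler_wpM2l // /s /sC -(ger0_norm alpha_ge0) -sqrtr_sqr.
  by rewrite -sqrtrM ?sqr_ge0 // ler_wsqrtr.
have Cf_ge0 : 0 <= Cf by apply: le_trans (HfB 0 0); exact: pnorm_ge0.
apply: le_trans (alg_lambda_mul_le gfx gfy (z := z k) alpha_ge0 s_ge0 (erefl _)) _.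
rewrite -!mulrA [sC * t]mulrC ler_pM ?addr_ge0 ?pnorm_ge0 ?mulr_ge0 //.
by rewrite lerD ?HfB //; apply: le_trans alpha_s_le _; rewrite ler_piMl.
Qed.

Lemma alg_budget N : (N <= K)%N -> gamma / 2 * \sum_(k < N) D k <= descent_budget.
Proof.
move=> NK; have [t_gt0 _ _ _ Kt3] := t_facts; have [gamma_gt0 gamma_le gamma_Lf _] := gamma_facts.
apply: le_trans (alg_sum_sqdir_le Hf HfL rho_ge0 alpha_ge0 gamma_gt0 gamma_Lf
  f_ge alg_ascent_le N) _.
set A := (Cf + Num.sqrt C0) * Num.sqrt C0.
have A_ge0 : 0 <= A.
  by rewrite mulr_ge0 ?addr_ge0 ?sqrtr_ge0 //; apply: le_trans (HfB 0 0); exact: pnorm_ge0.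
have NKt : N%:R * gamma * t <= 1.
  rewrite -[X in _ <= X]Kt3 exprSr mulrA; apply: ler_wpM2r; first exact: ltW.
  by apply: ler_pM; [exact: ler0n | exact: ltW | rewrite ler_nat | ].
have : N%:R * (gamma * (A * t)) <= A.
  by rewrite (_ : N%:R * _ = A * (N%:R * gamma * t)); [rewrite ler_piMr | ring].
by rewrite /descent_budget -/A => NA; apply: lerD NA; rewrite lerD2r.
Qed.

Let budget_ge0 : 0 <= descent_budget.
Proof. by have := alg_budget (leq0n K); rewrite big_ord0 mulr0. Qed.

Lemma alg_mean_sqdir_le :
  K%:R^-1 * \sum_(k < K) D k <= 2 * descent_budget * (1 + Lf) * t.
Proof.
have [t_gt0 _ _ invKE _] := t_facts; have [gamma_gt0 _ _ gamma_ge] := gamma_facts.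
have S_ge0 : 0 <= \sum_(k < K) D k by apply: sumr_ge0 => k _; exact: pnorm2_ge0.
have gS : gamma * \sum_(k < K) D k <= 2 * descent_budget.
  by have := alg_budget (leqnn K); lra.
move: S_ge0 gS; set S := \sum_(k < K) D k => S_ge0 gS.
rewrite invKE (_ : t ^+ 3 * S = t * (t ^+ 2 * S)); last by ring.
apply: le_trans (ler_wpM2l (ltW t_gt0) (ler_wpM2r S_ge0 gamma_ge)) _.
rewrite (_ : t * _ = gamma * S * ((1 + Lf) * t)); last by ring.
rewrite (_ : 2 * _ * (1 + Lf) * t = 2 * descent_budget * ((1 + Lf) * t)); last by ring.
by rewrite ler_wpM2r // mulr_ge0 ?addr_ge0 ?ltW.
Qed.

(* h grows only through the curvature term Lh/2 gamma^2 |Delta|^2, and gamma <= t. *)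
Lemma alg_mean_h_le :
  K%:R^-1 * \sum_(k < K) hfun ggy (z k).1 (z k).2 <= (C0 + Lh * descent_budget) * t.
Proof.
have [t_gt0 t_le1 alphaE _ _] := t_facts; have [gamma_gt0 gamma_le _ _] := gamma_facts.
apply: (mean_le (a := fun k => hfun ggy (z k).1 (z k).2)) => // k /ltnW kK.
apply: le_trans (alg_h_le gfx gfy Hh HhL x0 y0 rho_ge0 alpha_ge0 gamma_gt0 k) _.
have gamma_le_t : gamma <= t.
  by apply: le_trans gamma_le _; rewrite expr2 ler_piMl // ltW.
move: (alg_budget kK); set S := \sum_(j < k) D j => budget_k.
rewrite (_ : Lh / 2 * gamma ^+ 2 * S = Lh * gamma * (gamma / 2 * S)); last by ring.
have : Lh * gamma * (gamma / 2 * S) <= Lh * t * descent_budget.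
  apply: le_trans (ler_wpM2l _ budget_k) _; first by rewrite mulr_ge0 // !ltW.
  by apply: ler_wpM2r => //; apply: ler_wpM2l => //; exact: ltW.
move: h0; rewrite alphaE mulrDl [C0 * t]mulrC [Lh * descent_budget * t]mulrAC; lra.
Qed.

Lemma alg_eps_kkt (eps : R) :
  (2 * descent_budget * (1 + Lf) + (C0 + Lh * descent_budget)) * t <= eps ->
  let lam := fun k => alg_lambda gfx gfy ghx ghy rho alpha (z k) in
  exists k : nat, (k < K)%N /\
    Num.max (sqn (ggy (z k).1 (z k).2))
      (pnorm2 (gfx (z k).1 (z k).2 + lam k *: ghx (z k).1 (z k).2)
              (gfy (z k).1 (z k).2 + lam k *: ghy (z k).1 (z k).2)) <= eps /\
    eps_KKT eps gfx gfy (hfun ggy) ghx ghy (z k).1 (z k).2 (lam k).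
Proof.
move=> rate_le lam.
have [k kK k_le] := exists_le_mean (fun k => D k + hfun ggy (z k).1 (z k).2) K_gt0.
have avg_le : K%:R^-1 * \sum_(j < K) (D j + hfun ggy (z j).1 (z j).2) <= eps.
  rewrite big_split mulrDr; move: rate_le alg_mean_sqdir_le alg_mean_h_le.
  by rewrite mulrDl; lra.
have Dh_le : D k + hfun ggy (z k).1 (z k).2 <= eps := le_trans k_le avg_le.
have D_ge0 : 0 <= D k by exact: pnorm2_ge0.
have h_ge0 : 0 <= hfun ggy (z k).1 (z k).2 by exact: sqn_ge0.
have h_le : hfun ggy (z k).1 (z k).2 <= eps by move: Dh_le; lra.
have D_le : D k <= eps by move: Dh_le; lra.
by exists k; rewrite /eps_KKT !pnorm2_kkt_residual -/(D k) ge_max h_le D_le.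
Qed.
End Schedule.
End Rates.

Unset Implicit Arguments. Set Strict Implicit. Set Printing Implicit Defensive.

Theorem mainTheorem6 (R : realType) (Lf Lh Cf C0 fbar Fup : R) :
  0 < Lf -> 0 < Lh -> 0 < C0 ->
  exists c c' : R, 0 < c /\ 0 < c' /\
  forall (n m : nat) (f g : 'rV[R]_n -> 'rV[R]_m -> R)
    (gfx : 'rV[R]_n -> 'rV[R]_m -> 'rV[R]_n) (gfy : 'rV[R]_n -> 'rV[R]_m -> 'rV[R]_m)
    (ggx : 'rV[R]_n -> 'rV[R]_m -> 'rV[R]_n) (ggy : 'rV[R]_n -> 'rV[R]_m -> 'rV[R]_m)
    (ghx : 'rV[R]_n -> 'rV[R]_m -> 'rV[R]_n) (ghy : 'rV[R]_n -> 'rV[R]_m -> 'rV[R]_m),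
    has_grad f gfx gfy -> grad_lipschitz Lf gfx gfy -> grad_bounded Cf gfx gfy ->
    has_lbound (range (fun z : 'rV[R]_n * 'rV[R]_m => f z.1 z.2)) ->
    fbar = inf (range (fun z : 'rV[R]_n * 'rV[R]_m => f z.1 z.2)) ->
    has_grad g ggx ggy -> grad_C1 ggx ggy ->
    has_grad (hfun ggy) ghx ghy -> grad_lipschitz Lh ghx ghy ->
    let h := hfun ggy in
    (forall K : nat, (1 <= K)%N ->
      let alpha := K%:R `^ (- (1 / 6)) in
      let gamma := Num.min (K%:R `^ (- (2 / 3))) Lf^-1 in
      forall (x0 : 'rV[R]_n) (y0 : 'rV[R]_m),
        h x0 y0 <= alpha ^+ 2 * C0 -> f x0 y0 <= Fup ->
        let rho := rho_of ghx ghy h x0 y0 in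
        let z := alg_iter gfx gfy ghx ghy rho alpha gamma x0 y0 in
        let lam := fun k => alg_lambda gfx gfy ghx ghy rho alpha (z k) in
        (K%:R^-1 * \sum_(k < K)
            pnorm2 (alg_dx gfx gfy ghx ghy rho alpha (z k))
                   (alg_dy gfx gfy ghx ghy rho alpha (z k))
           <= c * K%:R `^ (- (1 / 3))) /\
        (K%:R^-1 * \sum_(k < K) h (z k).1 (z k).2 <= c * K%:R `^ (- (1 / 3)))) /\
    (forall eps : R, 0 < eps ->
      exists K : nat, (1 <= K)%N /\ K%:R <= c' * eps ^- 3 + 1 /\
      let alpha := K%:R `^ (- (1 / 6)) in
      let gamma := Num.min (K%:R `^ (- (2 / 3))) Lf^-1 in
      forall (x0 : 'rV[R]_n) (y0 : 'rV[R]_m),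
        h x0 y0 <= alpha ^+ 2 * C0 -> f x0 y0 <= Fup ->
        let rho := rho_of ghx ghy h x0 y0 in
        let z := alg_iter gfx gfy ghx ghy rho alpha gamma x0 y0 in
        let lam := fun k => alg_lambda gfx gfy ghx ghy rho alpha (z k) in
        exists t : nat, (t < K)%N /\
          Num.max (sqn (ggy (z t).1 (z t).2))
                  (pnorm2 (gfx (z t).1 (z t).2 + lam t *: ghx (z t).1 (z t).2)
                          (gfy (z t).1 (z t).2 + lam t *: ghy (z t).1 (z t).2)) <= eps /\
          eps_KKT eps gfx gfy h ghx ghy (z t).1 (z t).2 (lam t)).
Proof.
move=> Lf_gt0 Lh_gt0 C0_gt0.
have [c_gt0 c1_le c2_le c_le] :=
  rate_constant_facts (descent_budget Cf C0 fbar Fup) Lf_gt0 Lh_gt0 C0_gt0.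
set c := _ + _ in c_gt0 c1_le c2_le c_le.
exists c, (c ^+ 3); split=> //; split; first exact: exprn_gt0.
move=> n m f g gfx gfy ggx ggy ghx ghy Hf HfL HfB Hlb Hinf _ _ Hh HhL h.
have f_ge x y : fbar <= f x y by rewrite Hinf; apply: ge_inf => //; exists (x, y).
split.
  move=> K K1 alpha gamma x0 y0 h0 f0 rho z lam.
  have [/ltW t_ge0 _ _ _ _] := Kpow_third_facts R K1.
  split.
    apply: le_trans _ (ler_wpM2r t_ge0 c1_le).
    exact: (alg_mean_sqdir_le ghx ghy Lf_gt0 Hf HfL HfB f_ge K1 h0 f0).
  apply: le_trans _ (ler_wpM2r t_ge0 c2_le).
  exact: (alg_mean_h_le Lf_gt0 Lh_gt0 Hf HfL HfB f_ge Hh HhL K1 h0 f0).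
move=> eps eps_gt0; pose K := (Num.truncn (c ^+ 3 * eps ^- 3)).+1.
have cK : c ^+ 3 * eps ^- 3 < K%:R by exact: truncnS_gt.
exists K; split=> //; split.
  by rewrite /K -addn1 natrD lerD // truncn_le divr_ge0 // exprn_ge0 // ltW.
move=> alpha gamma x0 y0 h0 f0.
apply: (alg_eps_kkt Lf_gt0 Lh_gt0 Hf HfL HfB f_ge Hh HhL _ h0 f0) => //.
apply: le_trans (ltW (Kpow_third_lt c_gt0 eps_gt0 cK)).
by rewrite ler_wpM2r ?powR_ge0.
Qed.
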